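(* Let $G$ be a finite group. Then $\Delta_D(G)$ is Eulerian (i.e. has an Eulerian circuit) if and only if $|G|$ is odd.
   Context: For a finite group $G$, let $M(G)$ denote its Schur multiplier. A Schur cover of $G$ is a group $\tilde{G}$ with a central extension $\{e\}\to M(G)\xrightarrow{\iota}\tilde{G}\xrightarrow{\pi}G\to\{e\}$ such that $\iota(M(G))\subseteq Z(\tilde{G})\cap[\tilde{G},\tilde{G}]$ and $\tilde G$ has maximal order among such extensions. The deep commuting graph $\Delta_D(G)$ is the simple graph with vertex set $G$ in which two distinct vertices are adjacent if and only if their preimages under $\pi$ commute in $\tilde{G}$ (independent of the choice of Schur cover and preimages). *)

From mathcomp Require Import all_boot all_fingroup all_solvable.
Set Implicit Arguments. Unset Strict Implicit. Unset Printing Implicit Defensive.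
Import GroupScope.
Local Open Scope group_scope.

Definition stem_extension (hT gT : finGroupType) (H : {group hT})
    (G : {group gT}) (f : {morphism H >-> gT}) : Prop :=
  f @* H = G /\ 'ker f \subset 'Z(H) :&: [~: H, H].

Definition schur_cover (hT gT : finGroupType) (H : {group hT})
    (G : {group gT}) (f : {morphism H >-> gT}) : Prop :=
  stem_extension G f /\
  forall (kT : finGroupType) (K : {group kT}) (g : {morphism K >-> gT}),
    stem_extension G g -> (#|K| <= #|H|)%N.

Definition deep_adj (hT gT : finGroupType) (H : {group hT})
    (G : {group gT}) (f : {morphism H >-> gT}) : rel gT :=
  fun x y => [&& x \in G, y \in G, x != y &
    [forall a in H, forall b in H,
       ((f a == x) && (f b == y)) ==> (a * b == b * a)]].

Definition has_eulerian_circuit (T : finType) (V : {set T}) (e : rel T) : Prop :=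
  exists (v0 : T) (p : seq T),
    [/\ v0 \in V, path e v0 p, last v0 p = v0 &
      forall x y, x \in V -> y \in V -> e x y ->
        count_mem [set x; y] (pairmap (fun u w => [set u; w]) v0 p) = 1%N].

From mathcomp Require Import all_boot all_fingroup all_solvable.
From mathcomp Require Import zify.
Set Implicit Arguments. Unset Strict Implicit. Unset Printing Implicit Defensive.

(* Since the kernel of a Schur cover H -> G is central, preimages of f a and
   f b commute exactly when a and b do, so the neighbours of f a in the deep
   commuting graph are the elements of the subgroup f(C_H(a)) other than f a.
   In particular 1 is adjacent to every other vertex and has degree |G| - 1,
   so an Eulerian circuit forces |G| odd; conversely, for |G| odd every degree
   |f(C_H(a))| - 1 is even.  A graph with even degrees and a vertex adjacent to
   all others has an Eulerian circuit: a longest trail is closed, since its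
   end would otherwise still have an unused edge, and it uses every edge,
   since otherwise the universal vertex yields an unused edge at a vertex of
   the trail, where the closed trail can be rotated and then prolonged. *)

Section WalkEdges.
Variable T : finType.
Implicit Types (x u w z : T) (p : seq T).

Definition walk_edges x p : seq {set T} := pairmap (fun u w => [set u; w]) x p.

Lemma walk_edges_rcons x p w :
  walk_edges x (rcons p w) = rcons (walk_edges x p) [set last x p; w].
Proof. by rewrite /walk_edges -cats1 pairmap_cat -cats1. Qed.

Lemma walk_edges_vertex x p s z : s \in walk_edges x p -> z \in s -> z \in x :: p.
Proof.
elim: p x => [|y p IHp] x //=; rewrite inE => /orP[/eqP->|sp zs].
  by rewrite !inE => /orP[]->; rewrite ?orbT.
by rewrite inE IHp ?orbT.
Qed.

Lemma set2_inj u : injective (fun w => [set u; w]).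
Proof.
move=> w w' /= E.
have : w \in [set u; w'] by rewrite -E !inE eqxx orbT.
rewrite !inE => /orP[/eqP wu|/eqP //].
have : w' \in [set u; w] by rewrite E !inE eqxx orbT.
by rewrite wu !inE orbb => /eqP.
Qed.

Lemma count_mem_belast x p u :
  count_mem u (belast x p) + (last x p == u) = (x == u) + count_mem u p.
Proof.
have := congr1 (count_mem u) (lastI x p).
by rewrite -cats1 count_cat /= addn0 => <-.
Qed.

Lemma walk_edges_rotate x p1 u p2 : last x (p1 ++ u :: p2) = x ->
  perm_eq (walk_edges u (p2 ++ p1 ++ [:: u])) (walk_edges x (p1 ++ u :: p2)).
Proof.
rewrite last_cat /= => cl; apply/seq.permP => P.
by rewrite /walk_edges !pairmap_cat !count_cat /= cl; lia.
Qed.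

End WalkEdges.

Section EulerianCircuits.
Variables (T : finType) (V : {set T}) (e : rel T).
Hypotheses (e_sym : symmetric e) (e_irr : irreflexive e).
Hypothesis e_dom : forall x y, e x y -> x \in V.
Implicit Types (x u w : T) (p : seq T).

Lemma mem_walk_edges_rel x p s :
  path e x p -> s \in walk_edges x p -> exists a b, s = [set a; b] /\ e a b.
Proof.
elim: p x => [|y p IHp] x //= /andP[exy pp]; rewrite inE => /orP[/eqP->|].
  by exists x, y.
exact: IHp.
Qed.

Lemma count_walk_edges_at x p u : path e x p ->
  count (fun s : {set T} => u \in s) (walk_edges x p) =
  count_mem u (belast x p) + count_mem u p.
Proof.
elim: p x => [|y p IHp] x //= /andP[exy pp].
rewrite IHp // in_set2 (eq_sym u x) (eq_sym u y).
have nxy : x != y by apply: contraTneq exy => ->; rewrite e_irr.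
case: (eqVneq x u) => [<-|_]; first by rewrite eq_sym (negbTE nxy) /=; lia.
by case: (eqVneq y u) => /=; lia.
Qed.

Definition used_nbrs x p u := [set w | e u w & [set u; w] \in walk_edges x p].

Lemma card_used_nbrs x p u : path e x p -> uniq (walk_edges x p) ->
  #|used_nbrs x p u| = count_mem u (belast x p) + count_mem u p.
Proof.
move=> pp up; rewrite -(card_imset _ (@set2_inj _ u)) -count_walk_edges_at //.
rewrite -size_filter -(card_uniqP (filter_uniq _ up)); apply: eq_card => s.
rewrite mem_filter; apply/imsetP/andP => [[w]|[us sp]].
  by rewrite inE => /andP[_ ws] ->; rewrite ws !inE eqxx.
have [a [b [sab eab]]] := mem_walk_edges_rel pp sp; subst s.
move: us eab sp; rewrite !inE => /orP[]/eqP <- eab sp.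
  by exists b; rewrite // inE eab sp.
by exists a; rewrite 1?setUC // inE e_sym eab setUC sp.
Qed.

Definition trail x p := [&& x \in V, path e x p & uniq (walk_edges x p)].

Lemma trail_size x p : trail x p -> size p <= #|{: {set T}}|.
Proof.
case/and3P=> _ _ /card_uniqP; rewrite size_pairmap => <-.
exact: max_card.
Qed.

Lemma trail_rcons x p w : trail x p -> e (last x p) w ->
  [set last x p; w] \notin walk_edges x p -> trail x (rcons p w).
Proof.
case/and3P=> xV pp up ew nw.
by rewrite /trail xV rcons_path pp ew walk_edges_rcons rcons_uniq nw.
Qed.

Lemma odd_used_nbrs_last x p :
  trail x p -> last x p != x -> odd #|used_nbrs x p (last x p)|.
Proof.
case/and3P=> _ pp up open; rewrite card_used_nbrs //.
have := count_mem_belast x p (last x p); rewrite eqxx eq_sym (negbTE open) /=.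
by rewrite add0n => <-; rewrite addnA addnn oddD odd_double.
Qed.

Lemma even_used_nbrs_closed x p u :
  trail x p -> last x p = x -> ~~ odd #|used_nbrs x p u|.
Proof.
case/and3P=> _ pp up cl; rewrite card_used_nbrs //.
have := count_mem_belast x p u; rewrite cl addnC => /addnI ->.
by rewrite addnn odd_double.
Qed.

Lemma trail_rotate x p1 u p2 : trail x (p1 ++ u :: p2) ->
  last x (p1 ++ u :: p2) = x -> trail u (p2 ++ p1 ++ [:: u]).
Proof.
case/and3P=> _ pp up cl; rewrite /trail (perm_uniq (walk_edges_rotate cl)) up.
move: pp cl; rewrite cat_path last_cat /= => /and3P[pp1 e1u pp2] cl.
have uV : u \in V by rewrite e_sym in e1u; exact: e_dom e1u.
by rewrite uV cat_path pp2 cl cat_path pp1 /= e1u.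
Qed.

Lemma trail_extend_closed x p u w : trail x p -> last x p = x ->
  u \in x :: p -> e u w -> [set u; w] \notin walk_edges x p ->
  exists y q, trail y q /\ size q = (size p).+1.
Proof.
move=> tr cl; rewrite inE => /orP[/eqP->|up] euw nuw.
  by exists x, (rcons p w); rewrite size_rcons trail_rcons ?cl.
case/splitPr: up tr cl nuw => p1 p2 tr cl nuw.
exists u, (rcons (p2 ++ p1 ++ [:: u]) w); split; last first.
  by rewrite size_rcons !size_cat /=; lia.
apply: trail_rcons; first exact: trail_rotate tr cl.
  by rewrite !last_cat.
by rewrite (perm_mem (walk_edges_rotate cl)) !last_cat.
Qed.

Lemma eulerian_of_closed_trail x p : trail x p -> last x p = x ->
  (forall a b, e a b -> [set a; b] \in walk_edges x p) -> has_eulerian_circuit V e.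
Proof.
case/and3P=> xV pp up cl all_used; exists x, p; split => // a b _ _ eab.
by rewrite (count_uniq_mem _ up) all_used.
Qed.

Lemma even_degree_of_eulerian u :
  has_eulerian_circuit V e -> ~~ odd #|[set y | e u y]|.
Proof.
case=> x [p [xV pp cl once]].
have e_codom a b : e a b -> b \in V by rewrite e_sym; apply: e_dom.
have up : uniq (walk_edges x p).
  apply: count_mem_uniq => s; case: (boolP (s \in walk_edges x p)) => sp.
    have [a [b [-> eab]]] := mem_walk_edges_rel pp sp.
    exact: once (e_dom eab) (e_codom _ _ eab) eab.
  exact: count_memPn.
have -> : [set y | e u y] = used_nbrs x p u.
  apply/setP => w; rewrite !inE; case euw: (e u w) => //=.
  by rewrite -has_pred1 has_count once ?(e_dom euw) ?(e_codom _ _ euw).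
by apply: even_used_nbrs_closed cl; rewrite /trail xV pp up.
Qed.

Section EvenDegrees.
Hypothesis e_even : forall x, x \in V -> ~~ odd #|[set y | e x y]|.

Lemma unused_edge_of_odd x p u : odd #|used_nbrs x p u| ->
  exists2 w, e u w & [set u; w] \notin walk_edges x p.
Proof.
move=> od; have [v] : exists w, w \in used_nbrs x p u.
  by apply/set0Pn; apply: contraTneq od => ->; rewrite cards0.
rewrite inE => /andP[/e_dom uV _] {v}.
have : ~~ ([set y | e u y] \subset used_nbrs x p u).
  apply: contraL od => sub; have -> : used_nbrs x p u = [set y | e u y].
    apply/eqP; rewrite eqEsubset sub andbT.
    by apply/subsetP => y; rewrite !inE => /andP[].
  exact: e_even.
by case/subsetPn => w; rewrite !inE => euw; rewrite euw /=; exists w.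
Qed.

Lemma trail_extend_open x p : trail x p -> last x p != x ->
  exists w, trail x (rcons p w).
Proof.
move=> tr open; have [w euw nuw] := unused_edge_of_odd (odd_used_nbrs_last tr open).
by exists w; apply: trail_rcons.
Qed.

Variable c : T.
Hypothesis c_universal : forall x, x \in V -> x != c -> e c x.

Lemma unused_edge_at_walk x p a b : x \in V -> e a b ->
  [set a; b] \notin walk_edges x p ->
  exists u w, [/\ u \in x :: p, e u w & [set u; w] \notin walk_edges x p].
Proof.
move=> xV eab nab.
have [ap|an] := boolP (a \in x :: p); first by exists a, b.
have [bp|bn] := boolP (b \in x :: p); first by exists b, a; rewrite -e_sym setUC.
have off_walk y z : z \notin x :: p -> [set y; z] \notin walk_edges x p.
  by move=> zn; apply: contra zn => /walk_edges_vertex; apply; rewrite !inE eqxx orbT.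
have [cp|cn] := boolP (c \in x :: p).
  exists c, a; split; rewrite ?off_walk //; apply: c_universal; first exact: e_dom eab.
  by apply: contraNneq an => ->.
exists x, c; split; rewrite ?mem_head ?off_walk // e_sym c_universal //.
by apply: contraNneq cn => <-; rewrite mem_head.
Qed.

Lemma trail_grow x p : trail x p ->
  has_eulerian_circuit V e \/ exists y q, trail y q /\ size q = (size p).+1.
Proof.
move=> tr; have xV : x \in V by case/and3P: tr.
have [cl|open] := eqVneq (last x p) x; last first.
  right; have [w tw] := trail_extend_open tr open.
  by exists x, (rcons p w); rewrite size_rcons.
have [unused|all_used] :=
  boolP [exists a, exists b, e a b && ([set a; b] \notin walk_edges x p)].
  right; case/existsP: unused => a /existsP[b /andP[eab nab]].
  have [u [w [uxp euw nuw]]] := unused_edge_at_walk xV eab nab.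
  exact: trail_extend_closed tr cl uxp euw nuw.
left; apply: eulerian_of_closed_trail tr cl _ => a b eab.
by move/existsPn: all_used => /(_ a)/existsPn/(_ b); rewrite eab negbK.
Qed.

Theorem eulerian_of_even_degrees : c \in V -> has_eulerian_circuit V e.
Proof.
move=> cV.
have long_trails n : has_eulerian_circuit V e \/ exists x p, trail x p /\ n <= size p.
  elim: n => [|n [eul|[x [p [tr le_np]]]]]; [|by left|].
    by right; exists c, [::]; rewrite /trail cV.
  have [eul|[y [q [tq sq]]]] := trail_grow tr; first by left.
  by right; exists y, q; rewrite sq.
have [//|[x [p [tr]]]] := long_trails #|{: {set T}}|.+1.
by rewrite ltnNge (trail_size tr).
Qed.

End EvenDegrees.

End EulerianCircuits.

Import GroupScope.

Section DeepCommutingGraph.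
Variables (gT hT : finGroupType) (G : {group gT}) (H : {group hT}).
Variable f : {morphism H >-> gT}.

Lemma deep_adj_irr : irreflexive (deep_adj G f).
Proof. by move=> x; rewrite /deep_adj eqxx !andbF. Qed.

Lemma deep_adj_sym : symmetric (deep_adj G f).
Proof.
move=> x y; rewrite /deep_adj eq_sym andbCA; congr [&& _, _, _ & _].
apply/forall_inP/forall_inP => cf b bH; apply/forall_inP => a aH;
  apply/implyP => /andP[fb fa]; have := forall_inP (cf a aH) b bH;
  by rewrite fa fb => /eqP ->.
Qed.

Lemma deep_adj_dom x y : deep_adj G f x y -> x \in G.
Proof. by case/andP. Qed.

Lemma commute_central_ker a b a' b' : 'ker f \subset 'Z(H) ->
  a \in H -> b \in H -> a' \in H -> b' \in H -> f a' = f a -> f b' = f b ->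
  commute a b -> commute a' b'.
Proof.
move=> kerZ aH bH a'H b'H fa' fb' cab.
have [k kk ->] := ker_rcoset a'H aH fa'.
have [l lk ->] := ker_rcoset b'H bH fb'.
have central z t : z \in 'ker f -> t \in H -> commute z t.
  by move=> /(subsetP kerZ)/centerP[_ cz]; apply: cz.
have [kH lH] : k \in H /\ l \in H by case/setIP: kk; case/setIP: lk.
apply: commuteM; apply/commute_sym; apply: commuteM.
- exact: central.
- exact: central.
- exact/commute_sym/central.
- exact/commute_sym.
Qed.

Hypotheses (fHG : f @* H = G) (kerZ : 'ker f \subset 'Z(H)).

Lemma deep_adjE a y : a \in H ->
  deep_adj G f (f a) y = (y \in f @* 'C_H[a]) && (f a != y).
Proof.
move=> aH; rewrite /deep_adj -fHG mem_morphim //= andbCA.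
case: eqP => _; rewrite /= ?andbF ?andbT //.
apply/andP/idP => [[yG cf] | ].
  case/morphimP: yG cf => b bH _ -> cf.
  have := forall_inP (forall_inP cf a aH) b bH; rewrite !eqxx => /eqP cab.
  by rewrite mem_morphim // inE bH; apply/cent1P.
case/morphimP=> b bH /setIP[_ /cent1P cab] ->; split; first exact: mem_morphim.
apply/forall_inP => a' a'H; apply/forall_inP => b' b'H.
apply/implyP => /andP[/eqP fa' /eqP fb']; apply/eqP.
exact: commute_central_ker kerZ aH bH a'H b'H fa' fb' (commute_sym cab).
Qed.

Lemma deep_nbrsE a : a \in H -> [set y | deep_adj G f (f a) y] = f @* 'C_H[a] :\ f a.
Proof. by move=> aH; apply/setP => y; rewrite !inE deep_adjE // andbC eq_sym. Qed.

Lemma deep_nbrs1 : [set y | deep_adj G f 1 y] = G :\ 1.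
Proof. by rewrite -(morph1 f) deep_nbrsE // cent11T setIT fHG morph1. Qed.

End DeepCommutingGraph.

Theorem theorem3p4 (gT : finGroupType) (G : {group gT})
    (hT : finGroupType) (H : {group hT}) (f : {morphism H >-> gT}) :
  schur_cover G f ->
  (has_eulerian_circuit G (deep_adj G f) <-> odd #|G|).
Proof.
move=> [[fHG /subsetIP[kerZ _]] _].
have adj_sym := deep_adj_sym G f; have adj_irr := deep_adj_irr G f.
have adj_dom : forall x y, deep_adj G f x y -> x \in G := @deep_adj_dom _ _ G H f.
split => [eul | oddG].
  have := even_degree_of_eulerian adj_sym adj_irr adj_dom 1 eul.
  by rewrite deep_nbrs1 // (cardsD1 1 G) group1 oddD => /negbTE ->.
apply: (eulerian_of_even_degrees adj_sym adj_irr adj_dom _ _ (group1 G)).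
- move=> x; rewrite -{1}fHG => /morphimP[a aH _ ->]; rewrite deep_nbrsE //.
  have : odd #|f @* 'C_H[a]|.
    by apply: dvdn_odd oddG; rewrite -fHG cardSg // morphimS // subsetIl.
  have aC : a \in 'C_H[a] by rewrite inE aH cent1id.
  by rewrite (cardsD1 (f a)) mem_morphim //= oddD.
- by move=> x xG x1; rewrite -[deep_adj _ _ _ _]inE deep_nbrs1 // !inE x1.
Qed.
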